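(* Let $D\in\{D_1,D_2,\dots,D_8\}$. For every positive integer $v$ with $v\equiv 0\pmod{14}$, there exists a $D$-decomposition of $K^*_v$.
   Context: $K^*_v$ denotes the complete symmetric digraph of order $v$: it contains both arcs $(x,y)$ and $(y,x)$ for every pair of distinct vertices $x,y$. A $D$-decomposition of a digraph $K$ is a set of subdigraphs of $K$, each isomorphic to $D$, such that every arc of $K$ lies in exactly one of them. For distinct vertices $v_0,\dots,v_6$, the digraphs $D_i[v_0,v_1,\dots,v_6]$ ($i\in[1,8]$) all have vertex set $\{v_0,\dots,v_6\}$ and the following arc sets: $D_1$: $(v_1,v_0),(v_1,v_2),(v_2,v_3),(v_3,v_4),(v_4,v_5),(v_5,v_6),(v_6,v_0)$; $D_2$: $(v_1,v_0),(v_2,v_1),(v_2,v_3),(v_3,v_4),(v_4,v_5),(v_5,v_6),(v_6,v_0)$; $D_3$: $(v_1,v_0),(v_1,v_2),(v_3,v_2),(v_3,v_4),(v_4,v_5),(v_5,v_6),(v_6,v_0)$; $D_4$: $(v_1,v_0),(v_1,v_2),(v_2,v_3),(v_4,v_3),(v_4,v_5),(v_5,v_6),(v_6,v_0)$; $D_5$: $(v_1,v_0),(v_2,v_1),(v_3,v_2),(v_3,v_4),(v_4,v_5),(v_5,v_6),(v_6,v_0)$; $D_6$: $(v_1,v_0),(v_2,v_1),(v_2,v_3),(v_3,v_4),(v_5,v_4),(v_5,v_6),(v_6,v_0)$; $D_7$: $(v_1,v_0),(v_1,v_2),(v_3,v_2),(v_3,v_4),(v_4,v_5),(v_6,v_5),(v_6,v_0)$;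 $D_8$: $(v_1,v_0),(v_2,v_1),(v_2,v_3),(v_4,v_3),(v_4,v_5),(v_5,v_6),(v_6,v_0)$. $D_i$ also denotes the isomorphism type of $D_i[v_0,\dots,v_6]$. *)

From mathcomp Require Import all_boot.
Set Implicit Arguments. Unset Strict Implicit. Unset Printing Implicit Defensive.

(* Arc lists of D_1..D_8 on vertices v_0..v_6 (indices 0..6); (a,b) = arc (v_a,v_b). *)
Definition Darcs (i : nat) : seq (nat * nat) :=
  match i with
  | 1 => [:: (1,0); (1,2); (2,3); (3,4); (4,5); (5,6); (6,0)]
  | 2 => [:: (1,0); (2,1); (2,3); (3,4); (4,5); (5,6); (6,0)]
  | 3 => [:: (1,0); (1,2); (3,2); (3,4); (4,5); (5,6); (6,0)]
  | 4 => [:: (1,0); (1,2); (2,3); (4,3); (4,5); (5,6); (6,0)]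
  | 5 => [:: (1,0); (2,1); (3,2); (3,4); (4,5); (5,6); (6,0)]
  | 6 => [:: (1,0); (2,1); (2,3); (3,4); (5,4); (5,6); (6,0)]
  | 7 => [:: (1,0); (1,2); (3,2); (3,4); (4,5); (6,5); (6,0)]
  | 8 => [:: (1,0); (2,1); (2,3); (4,3); (4,5); (5,6); (6,0)]
  | _ => [::]
  end.

(* The copy D_i[f 0, ..., f 6] of D_i in K*_v (vertex set 'I_v), given by
   a labelling f of v_0..v_6 by vertices of K*_v; its arc list. *)
Definition copy_arcs (v i : nat) (f : {ffun 'I_7 -> 'I_v}) : seq ('I_v * 'I_v) :=
  [seq (f (inord a.1), f (inord a.2)) | a <- Darcs i].

(* A D_i-decomposition of K*_v: a list of copies D_i[f 0,...,f 6] with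
   distinct vertices (f injective) such that every arc (x,y), x <> y, of K*_v
   lies in exactly one copy of the list (this also forces the copies to be
   pairwise distinct, so the list represents a set). *)
Definition is_Ddecomposition (v i : nat) (B : seq {ffun 'I_7 -> 'I_v}) : Prop :=
  all (fun f : {ffun 'I_7 -> 'I_v} => injectiveb (fun k => f k)) B /\
  forall x y : 'I_v, x != y -> count (fun f => (x, y) \in copy_arcs i f) B = 1.

(* Write v = 14k and n = v - 1, and take Z_n + {oo} as vertex set.  Choose
   2k base copies of D: two "small" blocks (one through oo) whose arcs have
   the differences +-1, ..., +-6 and join oo to Z_n in both directions, and for
   each r in [1, k-1] a row block together with its mirror image,
   whose arcs have the differences +-s for the seven steps s of row r.  These
   steps cover all remaining differences +-7, ..., +-(7k-1), so the n
   translates of the base blocks cover every arc of K*_v.  As 2k * n copies of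
   D have exactly 7 * 2k * n = v (v - 1) arcs, no arc is covered twice. *)

From mathcomp Require Import all_boot zify.

Set Implicit Arguments. Unset Strict Implicit. Unset Printing Implicit Defensive.

Lemma eq1_of_sum_le_card (T : finType) (P : pred T) (c : T -> nat) :
  {in P, forall p, 0 < c p} -> \sum_(p in P) c p <= #|P| ->
  {in P, forall p, c p = 1}.
Proof.
move=> c_gt0 sum_le p Pp; apply/eqP; rewrite eqn_leq c_gt0 // andbT.
move: sum_le; rewrite -sum1_card (bigD1 p) //= [in X in _ <= X](bigD1 p) //=.
have : \sum_(q in P | q != p) 1 <= \sum_(q in P | q != p) c q.
  by apply: leq_sum => q /andP[Pq _]; exact: c_gt0.
lia.
Qed.

Lemma card_offdiag v : #|[pred p : 'I_v * 'I_v | p.1 != p.2]| = v * v.-1.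
Proof.
rewrite -sum1_card -(pair_big_dep xpredT (fun x y => x != y) (fun _ _ => 1)) /=.
rewrite (eq_bigr (fun _ => v.-1)) ?sum_nat_const ?card_ord // => x _.
rewrite sum1_card -[v in v.-1](card_ord v) -(cardC1 x); apply: eq_card => y.
by rewrite !inE eq_sym.
Qed.

Section Decomposition.

Variable i : nat.
Hypothesis Darcs_uniq : uniq (Darcs i).
Hypothesis Darcs_loopless :
  {in Darcs i, forall a, [&& a.1 < 7, a.2 < 7 & a.1 != a.2]}.

Lemma copy_arcs_uniq v (f : {ffun 'I_7 -> 'I_v}) :
  injective f -> uniq (copy_arcs i f).
Proof.
move=> f_inj; rewrite map_inj_in_uniq // => -[a1 a2] [b1 b2] Ha Hb [].
case/and3P: (Darcs_loopless Ha) => /= ha1 ha2 _.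
case/and3P: (Darcs_loopless Hb) => /= hb1 hb2 _.
move=> /f_inj/(congr1 val) E1 /f_inj/(congr1 val) E2.
by rewrite /= !inordK // in E1 E2; rewrite E1 E2.
Qed.

Lemma copy_arcs_loopless v (f : {ffun 'I_7 -> 'I_v}) p :
  injective f -> p \in copy_arcs i f -> p.1 != p.2.
Proof.
move=> f_inj /mapP[a Ha ->] /=; case/and3P: (Darcs_loopless Ha) => h1 h2.
by apply: contra_neq => /f_inj/(congr1 val) /=; rewrite !inordK.
Qed.

Lemma Ddecomposition_of_covering v (B : seq {ffun 'I_7 -> 'I_v}) :
  all (fun f : {ffun 'I_7 -> 'I_v} => injectiveb f) B ->
  size B * size (Darcs i) = v * v.-1 ->
  (forall x y : 'I_v, x != y -> has (fun f => (x, y) \in copy_arcs i f) B) ->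
  is_Ddecomposition i B.
Proof.
move=> /allP B_inj size_B B_cover; split; first exact/allP.
pose c (p : 'I_v * 'I_v) := count (fun f => p \in copy_arcs i f) B.
have sum_c : \sum_p c p = v * v.-1.
  rewrite -size_B /c; under eq_bigr => p _ do rewrite -sum1_count big_mkcond.
  rewrite exchange_big /= -sum1_size big_distrl /= !big_seq.
  apply: eq_bigr => f /B_inj/injectiveP f_inj; rewrite -big_mkcond sum1_card mul1n.
  by rewrite (card_uniqP (copy_arcs_uniq f_inj)) size_map.
have sum_offdiag : \sum_(p | p.1 != p.2) c p = \sum_p c p.
  rewrite [RHS](bigID (fun p : _ * _ => p.1 != p.2)) /= [X in _ + X]big1 ?addn0 //.
  move=> p /negPn p_loop; apply/eqP; rewrite -leqn0 leqNgt -has_count.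
  apply/hasP => -[f /B_inj/injectiveP f_inj /(copy_arcs_loopless f_inj)].
  by rewrite p_loop.
move=> x y xy; apply: (@eq1_of_sum_le_card _ [pred p | p.1 != p.2] c) => //.
- by move=> [x' y'] /= /B_cover; rewrite has_count.
- by rewrite sum_offdiag sum_c card_offdiag.
Qed.

End Decomposition.

Section CyclicDevelopment.

Variable n : nat.
Hypothesis n_gt0 : 0 < n.

(* Base blocks list the points of a copy of D in Z_n + {oo}, with None for oo;
   in 'I_n.+1 the point oo is ord_max. *)
Definition translate (o : option nat) (t : nat) : 'I_n.+1 :=
  if o is Some p then inord ((p + t) %% n) else ord_max.

Definition translate_block (b : seq (option nat)) (t : nat) : {ffun 'I_7 -> 'I_n.+1} :=
  [ffun j : 'I_7 => translate (nth None b j) t].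

Definition development (bases : seq (seq (option nat))) :=
  [seq translate_block b t | b <- bases, t <- iota 0 n].

Lemma size_development bases : size (development bases) = size bases * n.
Proof. by rewrite size_allpairs size_iota. Qed.

Lemma val_translate_Some p t : val (translate (Some p) t) = (p + t) %% n.
Proof. by rewrite /= inordK // ltnS ltnW // ltn_mod. Qed.

Lemma translate_SomeE p t (z : 'I_n.+1) : (p + t) %% n = z -> translate (Some p) t = z.
Proof. by move=> E; apply: ord_inj; rewrite val_translate_Some. Qed.

Lemma translate_block_inj b t :
  size b = 7 -> uniq b -> all (oapp (ltn^~ n) true) b ->
  injective (translate_block b t).
Proof.
move=> size_b b_uniq /allP b_lt j1 j2; rewrite !ffunE => E; apply/ord_inj/eqP.
have lt_b (j : 'I_7) : j < size b by rewrite size_b.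
rewrite -(nth_uniq None (lt_b j1) (lt_b j2) b_uniq).
move: E (b_lt _ (mem_nth None (lt_b j1))) (b_lt _ (mem_nth None (lt_b j2))).
case: (nth None b j1) => [p|]; case: (nth None b j2) => [q|] //= /(congr1 val);
  rewrite ?val_translate_Some /= => E lt1 lt2.
- by move/eqP: E; rewrite eqn_modDr !modn_small // => /eqP ->.
- by have := ltn_pmod (p + t) n_gt0; rewrite E ltnn.
- by have := ltn_pmod (q + t) n_gt0; rewrite -E ltnn.
Qed.

Lemma shift_onto p x : x < n -> exists2 t, t < n & (p + t) %% n = x.
Proof.
move=> x_lt; exists ((x + (n - p %% n)) %% n); first exact: ltn_pmod.
have p_lt := ltn_pmod p n_gt0.
rewrite modnDmr {1}(divn_eq p n) -addnA.
have -> : p %% n + (x + (n - p %% n)) = x + n by lia.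
by rewrite modnMDl modnDr modn_small.
Qed.

Lemma shift_diff p q t x y : x < n -> y < n ->
  (p + t) %% n = x -> q = p + (y + n - x) %[mod n] -> (q + t) %% n = y.
Proof.
move=> x_lt y_lt pt_x q_def.
rewrite -modnDml q_def modnDml addnAC -modnDml pt_x.
have -> : x + (y + n - x) = y + n by lia.
by rewrite modnDr modn_small.
Qed.

Variable i : nat.
Hypothesis Darcs_loopless :
  {in Darcs i, forall a, [&& a.1 < 7, a.2 < 7 & a.1 != a.2]}.

Definition base_arcs (b : seq (option nat)) :=
  [seq (nth None b a.1, nth None b a.2) | a <- Darcs i].

Definition all_base_arcs (bases : seq (seq (option nat))) :=
  flatten [seq base_arcs b | b <- bases].

Lemma development_has_arc bases o t : o \in all_base_arcs bases -> t < n ->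
  has (fun f => (translate o.1 t, translate o.2 t) \in copy_arcs i f)
      (development bases).
Proof.
case/flattenP=> _ /mapP[b b_in ->] /mapP[a a_in ->] t_lt /=.
apply/hasP; exists (translate_block b t); first by rewrite allpairs_f // mem_iota.
case/and3P: (Darcs_loopless a_in) => a1_lt a2_lt _.
by apply/mapP; exists a; rewrite // !ffunE !inordK.
Qed.

Lemma development_covers bases :
  (forall d, 0 < d < n -> exists p q,
     (Some p, Some q) \in all_base_arcs bases /\ q = p + d %[mod n]) ->
  (exists p, (Some p, None) \in all_base_arcs bases) ->
  (exists q, (None, Some q) \in all_base_arcs bases) ->
  forall x y : 'I_n.+1, x != y ->
  has (fun f => (x, y) \in copy_arcs i f) (development bases).
Proof.
move=> diffs [p0 to_inf] [q0 from_inf] x y xy.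
have ord_maxE (z : 'I_n.+1) : n <= z -> z = ord_max.
  by move=> z_ge; apply: ord_inj; apply/eqP; rewrite eqn_leq z_ge -ltnS ltn_ord.
case: (ltnP x n) => [x_lt|/ord_maxE x_max]; case: (ltnP y n) => [y_lt|/ord_maxE y_max].
- have d_gt0 : 0 < (y + n - x) %% n.
    case: (ltngtP x y) => [lt_xy|lt_yx|/ord_inj eq_xy]; last by rewrite eq_xy eqxx in xy.
      have -> : y + n - x = (y - x) + n by lia.
      rewrite modnDr modn_small; lia.
    rewrite modn_small; lia.
  have [|p [q [pq_in q_def]]] := diffs ((y + n - x) %% n); first by rewrite d_gt0 ltn_pmod.
  have [t t_lt pt_x] := shift_onto p x_lt.
  rewrite modnDmr in q_def.
  rewrite -(translate_SomeE pt_x) -(translate_SomeE (shift_diff x_lt y_lt pt_x q_def)).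
  exact: development_has_arc pq_in t_lt.
- have [t t_lt pt_x] := shift_onto p0 x_lt.
  rewrite -(translate_SomeE pt_x) y_max; exact: development_has_arc to_inf t_lt.
- have [t t_lt qt_y] := shift_onto q0 y_lt.
  rewrite -(translate_SomeE qt_y) x_max; exact: development_has_arc from_inf t_lt.
- by rewrite x_max y_max eqxx in xy.
Qed.

End CyclicDevelopment.

Definition arc_step (s : nat) (o : option nat * option nat) : bool :=
  if o is (Some p, Some q) then q == p + s else false.

Definition has_diff_pm (A : seq (option nat * option nat)) (s : nat) : bool :=
  has (arc_step s) A && has (arc_step s \o swap_pair) A.

Lemma arc_stepP s o : arc_step s o -> exists p, o = (Some p, Some (p + s)).
Proof. by case: o => [[p|] [q|]] //= /eqP->; exists p. Qed.

Lemma has_diff_pm_sub A A' s : {subset A <= A'} -> has_diff_pm A s -> has_diff_pm A' s.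
Proof.
move=> sAA' /andP[h1 h2]; apply/andP; split; apply/hasP;
  [case/hasP: h1 | case/hasP: h2] => o /sAA'; by exists o.
Qed.

Lemma has_diff_pm_mod A n s : s <= n -> has_diff_pm A s ->
  forall d, d \in [:: s; n - s] ->
  exists p q, (Some p, Some q) \in A /\ q = p + d %[mod n].
Proof.
move=> s_le /andP[/hasP[o o_in /arc_stepP[p o_def]] /hasP[o' o'_in /arc_stepP[q o'_def]]] d.
rewrite !inE => /orP[]/eqP->.
  by exists p, (p + s); rewrite -o_def.
exists (q + s), q; split; first by move: o'_in; rewrite -(swap_pairK o') o'_def.
by rewrite -addnA subnKC // modnDr.
Qed.

Lemma mirror_pair_diff_pm i pts c j J s :
  ((j, J) \in Darcs i) || ((J, j) \in Darcs i) -> j < size pts -> J < size pts ->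
  all (leq^~ c) pts -> nth 0 pts J = nth 0 pts j + s ->
  has_diff_pm (all_base_arcs i [:: map Some pts; map (Some \o subn c) pts]) s.
Proof.
move=> jJ_arc j_lt J_lt /allP pts_le step.
have ge_pts := pts_le _ (mem_nth 0 J_lt); rewrite step in ge_pts.
set u := nth 0 pts j in step ge_pts.
have arc_in b a : b \in [:: map Some pts; map (Some \o subn c) pts] -> a \in Darcs i ->
    (nth None b a.1, nth None b a.2) \in all_base_arcs i [:: map Some pts; map (Some \o subn c) pts].
  by move=> b_in a_in; apply/flattenP; exists (base_arcs i b); [exact: map_f | exact: map_f].
have mirror_step : c - u = c - (u + s) + s by lia.
case/orP: jJ_arc => a_in; apply/andP; split; apply/hasP.
- by exists (Some u, Some (u + s)); [have := arc_in _ _ (mem_head _ _) a_in | ];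
    rewrite /= ?(nth_map 0) // ?step //=.
- exists (Some (c - u), Some (c - (u + s))); last by rewrite /= mirror_step.
  by have := arc_in _ _ (mem_last _ _) a_in; rewrite /= !(nth_map 0) //= step.
- exists (Some (c - (u + s)), Some (c - u)); last by rewrite /= mirror_step.
  by have := arc_in _ _ (mem_last _ _) a_in; rewrite /= !(nth_map 0) //= step.
- by exists (Some (u + s), Some u); [have := arc_in _ _ (mem_head _ _) a_in | ];
    rewrite /= ?(nth_map 0) // ?step //=.
Qed.

Lemma Darcs_uniq i : 1 <= i <= 8 -> uniq (Darcs i).
Proof. by case/andP; do 9 case: i => [|i] //. Qed.

Lemma size_Darcs i : 1 <= i <= 8 -> size (Darcs i) = 7.
Proof. by case/andP; do 9 case: i => [|i] //. Qed.

Lemma Darcs_loopless i : 1 <= i <= 8 ->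
  {in Darcs i, forall a, [&& a.1 < 7, a.2 < 7 & a.1 != a.2]}.
Proof.
by case/andP=> i_ge1 i_le8; apply/allP; move: i_ge1 i_le8; do 9 (case: i => [|i] //).
Qed.

Lemma Darcs_cycle i j : 1 <= i <= 8 -> j < 7 ->
  ((j, j.+1 %% 7) \in Darcs i) || ((j.+1 %% 7, j) \in Darcs i).
Proof.
case/andP=> i_ge1 i_le8 j_lt.
have : all (fun j => ((j, j.+1 %% 7) \in Darcs i) || ((j.+1 %% 7, j) \in Darcs i)) (iota 0 7).
  by move: i_ge1 i_le8; do 9 (case: i => [|i] //).
by move/allP; apply; rewrite mem_iota.
Qed.

Definition small_blocks (i : nat) : seq (seq (option nat)) :=
  match i with
  | 1 => [:: [:: Some 10; Some 12; None; Some 0; Some 1; Some 3; Some 6];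
             [:: Some 3; Some 7; Some 12; Some 11; Some 5; Some 0; Some 6]]
  | 2 => [:: [:: Some 8; None; Some 0; Some 1; Some 3; Some 6; Some 10];
             [:: Some 1; Some 2; Some 5; Some 10; Some 4; Some 0; Some 6]]
  | 3 => [:: [:: Some 7; Some 3; Some 6; Some 0; None; Some 4; Some 5];
             [:: Some 0; Some 6; Some 5; Some 7; Some 12; Some 8; Some 3]]
  | 4 => [:: [:: Some 9; Some 3; None; Some 1; Some 0; Some 2; Some 5];
             [:: Some 0; Some 6; Some 11; Some 10; Some 12; Some 7; Some 3]]
  | 5 => [:: [:: Some 3; None; Some 1; Some 0; Some 2; Some 5; Some 9];
             [:: Some 5; Some 0; Some 4; Some 7; Some 6; Some 12; Some 10]]
  | 6 => [:: [:: Some 9; None; Some 1; Some 2; Some 4; Some 0; Some 3];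
             [:: Some 0; Some 1; Some 6; Some 11; Some 5; Some 7; Some 3]]
  | 7 => [:: [:: Some 5; Some 2; Some 6; Some 0; None; Some 4; Some 3];
             [:: Some 0; Some 1; Some 6; Some 11; Some 5; Some 2; Some 4]]
  | 8 => [:: [:: Some 5; None; Some 1; Some 2; Some 0; Some 3; Some 7];
             [:: Some 5; Some 0; Some 6; Some 1; Some 4; Some 10; Some 9]]
  | _ => [::]
  end.

Lemma small_blocks_spec i : 1 <= i <= 8 ->
  let A := all_base_arcs i (small_blocks i) in
  [/\ all (has_diff_pm A) (iota 1 6),
      has (fun o => (o.1 != None) && (o.2 == None)) A,
      has (fun o => (o.1 == None) && (o.2 != None)) A,
      size (small_blocks i) = 2 &
      all (fun b => [&& size b == 7, uniq b & all (oapp (ltn^~ 13) true) b])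
          (small_blocks i)].
Proof. by case/andP; do 9 case: i => [|i] //. Qed.

(* Cyclically consecutive points of row r differ alternately by +s and -s, s
   running through row_steps r; the mirror image x |-> 14r + 4 - x of the row
   reverses every sign. *)
Definition row_pts (r : nat) : seq nat :=
  [:: 7*r+4; 14*r+4; 7*r-1; 14*r; 7*r-6; 14*r-4; 0].

Definition row_steps (r : nat) : seq nat :=
  [:: 7*r; 7*r+5; 7*r+1; 7*r+6; 7*r+2; 14*r-4; 7*r+4].

Lemma row_pts_step r j : 1 <= r -> j < 7 ->
  let u := nth 0 (row_pts r) j in let w := nth 0 (row_pts r) (j.+1 %% 7) in
  let s := nth 0 (row_steps r) j in w = u + s \/ u = w + s.
Proof. by move=> r_ge1; do 7 (case: j => [|j] //=; first by lia). Qed.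

Lemma row_steps_cover k d : 0 < k -> 0 < d < 14*k - 1 ->
  d <= 6 \/ 14*k - 1 - d <= 6 \/
  exists r j, [/\ 1 <= r <= k.-1, j < 7 &
                  d \in [:: nth 0 (row_steps r) j; 14*k - 1 - nth 0 (row_steps r) j]].
Proof.
move=> k_gt0 /andP[d_gt0 d_lt].
case: (leqP d 6) => d_small; first by left.
case: (leqP (14*k - 1 - d) 6) => d_large; first by right; left.
right; right.
(* The steps of row r are 7r + {0,1,2,4,5,6} and 14r - 4 = 7(2r - 1) + 3;
   c = 7m + 3 with m even is the complement of the step 14(k - m/2) - 4. *)
have [c [c_d c_mid]] : exists c, (c = d \/ c = 14*k - 1 - d) /\ 7 <= c <= 7*k - 1.
  by case: (leqP d (7*k - 1)) => d_half; [exists d | exists (14*k - 1 - d)]; lia.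
suff [r [j [r_rng j_lt s_c]]] : exists r j, [/\ 1 <= r <= k.-1, j < 7 &
    c \in [:: nth 0 (row_steps r) j; 14*k - 1 - nth 0 (row_steps r) j]].
  by exists r, j; split=> //; move: s_c; rewrite !inE; lia.
case: (boolP (c %% 7 == 3)) => c_mod3.
  case: (boolP (odd (c %/ 7))) => c_odd.
    by exists ((c %/ 7).+1./2), 5; rewrite !inE /=; split; lia.
  by exists (k - (c %/ 7)./2), 5; rewrite !inE /=; split; lia.
have : c %% 7 < 7 by rewrite ltn_pmod.
case c_mod: (c %% 7) => [|[|[|[|[|[|[|m]]]]]]] _ //; try lia.
- by exists (c %/ 7), 0; rewrite !inE /=; split; lia.
- by exists (c %/ 7), 2; rewrite !inE /=; split; lia.
- by exists (c %/ 7), 4; rewrite !inE /=; split; lia.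
- by exists (c %/ 7), 6; rewrite !inE /=; split; lia.
- by exists (c %/ 7), 1; rewrite !inE /=; split; lia.
- by exists (c %/ 7), 3; rewrite !inE /=; split; lia.
Qed.

Definition row_pair (r : nat) : seq (seq (option nat)) :=
  [:: map Some (row_pts r); map (Some \o subn (14*r+4)) (row_pts r)].

Lemma row_pts_le r : 1 <= r -> all (leq^~ (14*r+4)) (row_pts r).
Proof. by move=> r_ge1; rewrite /= !leq_subLR; apply/and5P; split; lia. Qed.

Lemma row_pair_diff_pm i r j : 1 <= i <= 8 -> 1 <= r -> j < 7 ->
  has_diff_pm (all_base_arcs i (row_pair r)) (nth 0 (row_steps r) j).
Proof.
move=> i_rng r_ge1 j_lt; have edge := Darcs_cycle i_rng j_lt.
have j'_lt : j.+1 %% 7 < 7 by rewrite ltn_pmod.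
case: (row_pts_step r_ge1 j_lt) => step.
- by apply: (mirror_pair_diff_pm edge) => //; exact: row_pts_le.
- by apply: mirror_pair_diff_pm step => //; [rewrite orbC | exact: row_pts_le].
Qed.

Definition base_blocks (i k : nat) : seq (seq (option nat)) :=
  small_blocks i ++ flatten [seq row_pair r | r <- iota 1 k.-1].

Lemma size_base_blocks i k : 1 <= i <= 8 -> 0 < k -> size (base_blocks i k) = 2 * k.
Proof.
move=> i_rng k_gt0; rewrite size_cat; have [_ _ _ -> _] := small_blocks_spec i_rng.
have size_rows m s : size (flatten [seq row_pair r | r <- iota s m]) = 2 * m.
  by elim: m s => //= m IH s; rewrite IH mulnS.
rewrite size_rows; lia.
Qed.

Lemma row_pts_uniq r : 1 <= r -> uniq (row_pts r).
Proof. by move=> r_ge1; rewrite /= !inE; lia. Qed.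

Lemma all_base_arcs_sub i bs bs' :
  {subset bs <= bs'} -> {subset all_base_arcs i bs <= all_base_arcs i bs'}.
Proof.
move=> sub o /flattenP[_ /mapP[b b_in ->] o_in].
by apply/flattenP; exists (base_arcs i b); [exact/map_f/sub | ].
Qed.

Lemma row_pair_sub i k r : 1 <= r <= k.-1 -> {subset row_pair r <= base_blocks i k}.
Proof.
move=> r_rng b b_in; rewrite mem_cat; apply/orP; right.
by apply/flattenP; exists (row_pair r); rewrite // map_f // mem_iota; lia.
Qed.

Lemma base_blocks_wf i k : 1 <= i <= 8 -> 0 < k ->
  {in base_blocks i k, forall b,
     [&& size b == 7, uniq b & all (oapp (ltn^~ (14*k - 1)) true) b]}.
Proof.
move=> i_rng k_gt0 b; rewrite mem_cat => /orP[b_small | /flattenP[_ /mapP[r r_in ->] b_row]].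
  have [_ _ _ _ /allP/(_ b b_small)/and3P[-> -> b_lt]] := small_blocks_spec i_rng.
  by apply: sub_all b_lt => -[p|] //= p_lt; lia.
have [r_ge1 r_lt] : 1 <= r /\ 14*r+4 < 14*k - 1 by move: r_in; rewrite mem_iota; lia.
have /allP pts_le := row_pts_le r_ge1.
move: b_row; rewrite !inE => /orP[]/eqP->; rewrite size_map eqxx all_map.
- rewrite (map_inj_uniq (@Some_inj _)) row_pts_uniq // !andTb.
  by apply/allP => p /pts_le /leq_ltn_trans; apply.
- have mirror_inj : {in row_pts r &, injective (Some \o subn (14*r+4))}.
    by move=> p q /pts_le p_le /pts_le q_le [] /eqP; rewrite eqn_sub2lE // => /eqP.
  rewrite (map_inj_in_uniq mirror_inj) row_pts_uniq // !andTb.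
  by apply/allP => p _ /=; apply: leq_ltn_trans r_lt; exact: leq_subr.
Qed.

Lemma base_blocks_diffs i k : 1 <= i <= 8 -> 0 < k ->
  forall d, 0 < d < 14*k - 1 -> exists p q,
    (Some p, Some q) \in all_base_arcs i (base_blocks i k) /\ q = p + d %[mod 14*k - 1].
Proof.
move=> i_rng k_gt0 d d_rng.
have realize bs s : {subset bs <= base_blocks i k} -> has_diff_pm (all_base_arcs i bs) s ->
    d \in [:: s; 14*k - 1 - s] -> exists p q,
    (Some p, Some q) \in all_base_arcs i (base_blocks i k) /\ q = p + d %[mod 14*k - 1].
  move=> sub_bs /(has_diff_pm_sub (all_base_arcs_sub sub_bs)) bs_s d_in.
  have s_le : s <= 14*k - 1 by move: d_in; rewrite !inE; lia.
  exact: has_diff_pm_mod s_le bs_s _ d_in.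
have [small_diffs _ _ _ _] := small_blocks_spec i_rng.
have small_sub : {subset small_blocks i <= base_blocks i k}.
  by move=> b b_in; rewrite mem_cat b_in.
case: (row_steps_cover k_gt0 d_rng) => [d_small | [d_large | [r [j [r_rng j_lt d_in]]]]].
- by apply: (realize _ d small_sub); [apply: (allP small_diffs); rewrite mem_iota; lia |
    rewrite mem_head].
- apply: (realize _ (14*k - 1 - d) small_sub).
    by apply: (allP small_diffs); rewrite mem_iota; lia.
  by rewrite !inE; apply/orP; right; apply/eqP; lia.
- apply: (realize _ _ (row_pair_sub i r_rng) _ d_in).
  by apply: row_pair_diff_pm => //; case/andP: r_rng.
Qed.

Lemma base_blocks_inf_arcs i k : 1 <= i <= 8 ->
  (exists p, (Some p, None) \in all_base_arcs i (base_blocks i k)) /\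
  (exists q, (None, Some q) \in all_base_arcs i (base_blocks i k)).
Proof.
move=> i_rng.
have [_ /hasP[[o1 o2] o_in o_to_inf] /hasP[[o1' o2'] o'_in o'_from_inf] _ _] :=
  small_blocks_spec i_rng.
have small_sub : {subset all_base_arcs i (small_blocks i) <= all_base_arcs i (base_blocks i k)}.
  by apply: all_base_arcs_sub => b b_in; rewrite mem_cat b_in.
split.
- by case: o1 o2 o_in o_to_inf => [p|] [q|] // /small_sub arc_in _; exists p.
- by case: o1' o2' o'_in o'_from_inf => [p|] [q|] // /small_sub arc_in _; exists q.
Qed.

Lemma Ddecomposition_14k i k : 1 <= i <= 8 -> 0 < k ->
  exists B : seq {ffun 'I_7 -> 'I_(14*k - 1).+1}, is_Ddecomposition i B.
Proof.
move=> i_rng k_gt0; set n := 14*k - 1.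
have n_gt0 : 0 < n by rewrite /n; lia.
exists (development n (base_blocks i k)).
apply: (Ddecomposition_of_covering (Darcs_uniq i_rng) (Darcs_loopless i_rng)).
- apply/allP => _ /allpairsP[[b t] [/= b_in _ ->]]; apply/injectiveP.
  case/and3P: (base_blocks_wf i_rng k_gt0 b_in) => /eqP size_b b_uniq b_lt.
  exact: translate_block_inj.
- rewrite size_development size_base_blocks // size_Darcs // /n; nia.
- have [to_inf from_inf] := base_blocks_inf_arcs k i_rng.
  by apply: (development_covers n_gt0 (Darcs_loopless i_rng)) => //; exact: base_blocks_diffs.
Qed.

Theorem lemma3p2 (i : nat) (hi : 1 <= i <= 8) (v : nat) (hv : 0 < v)
  (h14 : v %% 14 = 0) :
  exists B : seq {ffun 'I_7 -> 'I_v}, is_Ddecomposition i B.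
Proof.
have k_gt0 : 0 < v %/ 14 by lia.
have -> : v = (14 * (v %/ 14) - 1).+1 by lia.
exact: Ddecomposition_14k.
Qed.
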